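(* Let $G$ be a two-player stage game with $|V_1^{m,p}|>1$ and $|V_2^{m,p}|>1$. If $G\in\mathcal{G}_{LS}^{m,m}$, then $G\in\mathcal{G}_{LS}^{m,p}$.
   Context: A two-player stage game $G$ has finite nonempty action sets $A_1,A_2$ and payoffs $u_1,u_2:A_1\times A_2\to\mathbb{R}$, extended to mixed strategies by expectation. $G(T)$ is the $T$-round repetition with realized actions observed each round and payoffs the expected sum of stage payoffs; an SPE of $G(T)$ is a strategy profile whose continuation after every history of length $k<T$ is a Nash equilibrium of $G(T-k)$. Regimes: pure-pure ($p,p$): both players restricted to actions (in the stage game and in every round, including deviations); mixed-pure ($m,p$): player 1 may mix, player 2 uses only actions; mixed-mixed ($m,m$): both may mix. For regime $r$, $\mathrm{Nash}^r(G)$ is the set of stage-game profiles available in $r$ from which no player can profitably deviate unilaterally to a strategy available in $r$, and $V_i^r=\{u_i(\sigma):\sigma\in\mathrm{Nash}^r(G)\}$. Locally suboptimal behavior occurs in an SPE $\mu$ of $G(T)$ (regime $r$) if for some history $h$ of length $k<T$, $(\mu_1(h),\mu_2(h))\notin\mathrm{Nash}^r(G)$. $\mathcal{G}_{LS}^r$ is the set of stage games $G$ for which there exist $T\ge1$ and an SPE of $G(T)$ in regime $r$ in which locally suboptimal behavior occurs. *)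

From HB Require Import structures.
From mathcomp Require Import all_boot all_order all_algebra.
From mathcomp Require Import reals.
Set Implicit Arguments. Unset Strict Implicit. Unset Printing Implicit Defensive.
Import Order.TTheory GRing.Theory Num.Theory.
Local Open Scope ring_scope.

Record game (R : realType) (A1 A2 : finType) := Game {
  u1 : A1 -> A2 -> R;
  u2 : A1 -> A2 -> R }.

Definition is_mixed (R : realType) (A : finType) (p : {ffun A -> R}) : Prop :=
  (forall a, 0 <= p a) /\ \sum_(a : A) p a = 1.

Definition dirac (R : realType) (A : finType) (a : A) : {ffun A -> R} :=
  [ffun b => (b == a)%:R].

Definition is_pure (R : realType) (A : finType) (p : {ffun A -> R}) : Prop :=
  exists a : A, p = dirac R a.

Definition avail (R : realType) (A : finType) (m : bool) (p : {ffun A -> R}) : Prop :=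
  if m then is_mixed p else is_pure p.

Record regime := Regime { mix1 : bool; mix2 : bool }.
Definition PP := Regime false false.
Definition MP := Regime true false.
Definition MM := Regime true true.

Definition exp_pay (R : realType) (A1 A2 : finType) (u : A1 -> A2 -> R)
  (p1 : {ffun A1 -> R}) (p2 : {ffun A2 -> R}) : R :=
  \sum_(a1 : A1) \sum_(a2 : A2) p1 a1 * p2 a2 * u a1 a2.

Definition stage_nash (R : realType) (A1 A2 : finType) (r : regime)
  (G : game R A1 A2) (p1 : {ffun A1 -> R}) (p2 : {ffun A2 -> R}) : Prop :=
  [/\ avail (mix1 r) p1, avail (mix2 r) p2,
      (forall q1, avail (mix1 r) q1 -> exp_pay (u1 G) q1 p2 <= exp_pay (u1 G) p1 p2) &
      (forall q2, avail (mix2 r) q2 -> exp_pay (u2 G) p1 q2 <= exp_pay (u2 G) p1 p2)].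

Definition V1 (R : realType) (A1 A2 : finType) (r : regime) (G : game R A1 A2) (x : R) : Prop :=
  exists p1 p2, stage_nash r G p1 p2 /\ x = exp_pay (u1 G) p1 p2.
Definition V2 (R : realType) (A1 A2 : finType) (r : regime) (G : game R A1 A2) (x : R) : Prop :=
  exists p1 p2, stage_nash r G p1 p2 /\ x = exp_pay (u2 G) p1 p2.

Definition more_than_one (R : realType) (P : R -> Prop) : Prop :=
  exists x y, [/\ P x, P y & x <> y].

(* Histories: chronological sequences of realized action profiles.
   A strategy of player i maps histories to (mixed) stage strategies. *)
Definition history (A1 A2 : finType) := seq (A1 * A2)%type.
Definition strat (R : realType) (A1 A2 : finType) (A : finType) :=
  history A1 A2 -> {ffun A -> R}.

Fixpoint cont_pay (R : realType) (A1 A2 : finType) (u : A1 -> A2 -> R)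
  (s1 : strat R A1 A2 A1) (s2 : strat R A1 A2 A2) (h : history A1 A2) (n : nat) : R :=
  match n with
  | 0 => 0
  | n'.+1 => \sum_(a1 : A1) \sum_(a2 : A2)
               s1 h a1 * s2 h a2 * (u a1 a2 + cont_pay u s1 s2 (rcons h (a1, a2)) n')
  end.

Definition rep_pay (R : realType) (A1 A2 : finType) (u : A1 -> A2 -> R)
  (s1 : strat R A1 A2 A1) (s2 : strat R A1 A2 A2) (n : nat) : R :=
  cont_pay u s1 s2 [::] n.

Definition avail_strat (R : realType) (A1 A2 A : finType) (m : bool)
  (s : strat R A1 A2 A) : Prop := forall h, avail m (s h).

Definition shift (R : realType) (A1 A2 A : finType) (s : strat R A1 A2 A)
  (h : history A1 A2) : strat R A1 A2 A := fun h' => s (h ++ h').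

Definition rep_nash (R : realType) (A1 A2 : finType) (r : regime) (G : game R A1 A2)
  (n : nat) (s1 : strat R A1 A2 A1) (s2 : strat R A1 A2 A2) : Prop :=
  [/\ avail_strat (mix1 r) s1, avail_strat (mix2 r) s2,
      (forall t1, avail_strat (mix1 r) t1 -> rep_pay (u1 G) t1 s2 n <= rep_pay (u1 G) s1 s2 n) &
      (forall t2, avail_strat (mix2 r) t2 -> rep_pay (u2 G) s1 t2 n <= rep_pay (u2 G) s1 s2 n)].

Definition is_SPE (R : realType) (A1 A2 : finType) (r : regime) (G : game R A1 A2)
  (T : nat) (s1 : strat R A1 A2 A1) (s2 : strat R A1 A2 A2) : Prop :=
  forall h : history A1 A2, (size h < T)%N ->
    rep_nash r G (T - size h) (shift s1 h) (shift s2 h).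

Definition loc_subopt (R : realType) (A1 A2 : finType) (r : regime) (G : game R A1 A2)
  (T : nat) (s1 : strat R A1 A2 A1) (s2 : strat R A1 A2 A2) : Prop :=
  exists h : history A1 A2, (size h < T)%N /\ ~ stage_nash r G (s1 h) (s2 h).

Definition in_GLS (R : realType) (A1 A2 : finType) (r : regime) (G : game R A1 A2) : Prop :=
  exists (T : nat) (s1 : strat R A1 A2 A1) (s2 : strat R A1 A2 A2),
    [/\ (1 <= T)%N, is_SPE r G T s1 s2 & loc_subopt r G T s1 s2].

From mathcomp Require Import all_boot all_order all_algebra.
From mathcomp Require Import reals.
From Stdlib Require Import Classical.
From mathcomp Require Import lra.
Set Implicit Arguments. Unset Strict Implicit. Unset Printing Implicit Defensive.
Import Order.TTheory GRing.Theory Num.Theory.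
Local Open Scope ring_scope.

(* If G is in G_LS^{m,m}, some stage profile is not a Nash
   equilibrium, so not every pure profile is an equilibrium in regime (m,p)
   (otherwise every payoff u_i would be insensitive to player i's own action
   and every mixed profile would be an equilibrium).  Fix a pure profile
   (a1, a2) that is not an (m,p)-equilibrium.  Since |V_i^{m,p}| > 1, each
   player i has a "reward" and a "punishment" (m,p)-equilibrium whose payoffs
   to i differ by d_i > 0.  In G(2K+1), play (a1, a2) in round one; then play
   for K rounds player 1's reward equilibrium, or her punishment one if she
   deviated in round one, and then K rounds for player 2 likewise.  After
   round one only stage equilibria are played, independently of the history,
   so every later subgame is in equilibrium; in round one, a deviation gains
   a bounded amount which K d_i outweighs for K large. *)

Section MixedStrategies.
Variable R : realType.

Lemma sum_dirac (A : finType) (a : A) (F : A -> R) :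
  \sum_(b : A) dirac R a b * F b = F a.
Proof.
rewrite (bigD1 a) //= big1 ?addr0; first by rewrite ffunE eqxx mul1r.
by move=> b /negbTE nb; rewrite ffunE nb mul0r.
Qed.

Lemma dirac_mixed (A : finType) (a : A) : is_mixed (dirac R a).
Proof.
split=> [b|]; first by rewrite ffunE ler0n.
by rewrite -(sum_dirac a (fun _ => 1)); apply: eq_bigr => b _; rewrite mulr1.
Qed.

Lemma avail_mixed (A : finType) (m : bool) (p : {ffun A -> R}) :
  avail m p -> is_mixed p.
Proof. by case: m => //= -[a ->]; apply: dirac_mixed. Qed.

Lemma nash_mixed (A1 A2 : finType) (r : regime) (G : game R A1 A2) p1 p2 :
  stage_nash r G p1 p2 -> is_mixed p1 /\ is_mixed p2.
Proof. by case=> /avail_mixed m1 /avail_mixed m2 _ _. Qed.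

Lemma mixed_inhabited (A : finType) (p : {ffun A -> R}) : is_mixed p -> inhabited A.
Proof.
case=> _ p1; case: (pickP (@predT A)) => [a _|A0]; first by constructor.
by move: p1; rewrite big_pred0 // => /eqP; rewrite eq_sym oner_eq0.
Qed.

Lemma mixed_avg_const (A : finType) (p : {ffun A -> R}) (F : A -> R) (c : R) :
  is_mixed p -> (forall a, F a = c) -> \sum_(a : A) p a * F a = c.
Proof.
by move=> [_ p1] hF; under eq_bigr do rewrite hF; rewrite -mulr_suml p1 mul1r.
Qed.

Lemma mixed_avg_le (A : finType) (p : {ffun A -> R}) (F : A -> R) (c : R) :
  is_mixed p -> (forall a, F a <= c) -> \sum_(a : A) p a * F a <= c.
Proof.
move=> [p0 p1] hF; apply: le_trans (_ : _ <= \sum_(a : A) p a * c) _.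
  by apply: ler_sum => a _; apply: ler_wpM2l.
by rewrite -mulr_suml p1 mul1r.
Qed.

Section TwoPlayers.
Variables A1 A2 : finType.
Implicit Types (p : {ffun A1 -> R}) (q : {ffun A2 -> R}).

Lemma sum2_const p q (c : R) : is_mixed p -> is_mixed q ->
  \sum_(a1 : A1) \sum_(a2 : A2) p a1 * q a2 * c = c.
Proof.
move=> [_ hp] [_ hq]; under eq_bigr => a1 _ do rewrite -mulr_suml -mulr_sumr hq mulr1.
by rewrite -mulr_suml hp mul1r.
Qed.

Lemma sum2_split (u : A1 -> A2 -> R) p q (c : R) : is_mixed p -> is_mixed q ->
  \sum_(a1 : A1) \sum_(a2 : A2) p a1 * q a2 * (u a1 a2 + c) = exp_pay u p q + c.
Proof.
move=> hp hq; rewrite /exp_pay -[X in _ = _ + X](sum2_const c hp hq) -big_split /=.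
apply: eq_bigr => a1 _; rewrite -big_split /=.
by apply: eq_bigr => a2 _; rewrite mulrDr.
Qed.

Lemma sum2_le p q (F F' : A1 -> A2 -> R) : is_mixed p -> is_mixed q ->
  (forall a1 a2, F a1 a2 <= F' a1 a2) ->
  \sum_(a1 : A1) \sum_(a2 : A2) p a1 * q a2 * F a1 a2 <=
  \sum_(a1 : A1) \sum_(a2 : A2) p a1 * q a2 * F' a1 a2.
Proof.
move=> [p0 _] [q0 _] hF; apply: ler_sum => a1 _; apply: ler_sum => a2 _.
by apply: ler_wpM2l; [apply: mulr_ge0|].
Qed.

Lemma sum2_diracl (a : A1) q (F : A1 -> A2 -> R) :
  \sum_(b1 : A1) \sum_(b2 : A2) dirac R a b1 * q b2 * F b1 b2 =
  \sum_(b2 : A2) q b2 * F a b2.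
Proof.
rewrite -(sum_dirac a (fun b1 => \sum_(b2 : A2) q b2 * F b1 b2)).
by apply: eq_bigr => b1 _; rewrite mulr_sumr; apply: eq_bigr => b2 _; rewrite mulrA.
Qed.

Lemma sum2_diracr p (a : A2) (F : A1 -> A2 -> R) :
  \sum_(b1 : A1) \sum_(b2 : A2) p b1 * dirac R a b2 * F b1 b2 =
  \sum_(b1 : A1) p b1 * F b1 a.
Proof.
apply: eq_bigr => b1 _; rewrite -(sum_dirac a (fun b2 => p b1 * F b1 b2)).
by apply: eq_bigr => b2 _; rewrite mulrCA mulrA.
Qed.

Lemma exp_pay_dirac (u : A1 -> A2 -> R) (a1 : A1) (a2 : A2) :
  exp_pay u (dirac R a1) (dirac R a2) = u a1 a2.
Proof. by rewrite /exp_pay sum2_diracl sum_dirac. Qed.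

End TwoPlayers.
End MixedStrategies.

Section FollowingStageEquilibria.
Variables (R : realType) (A1 A2 : finType).
Implicit Types (u : A1 -> A2 -> R) (h : history A1 A2).

Lemma cont_pay_le u s1 s2 h (v : nat -> R) n :
  (forall h', is_mixed (s1 (h ++ h')) /\ is_mixed (s2 (h ++ h'))) ->
  (forall h', exp_pay u (s1 (h ++ h')) (s2 (h ++ h')) <= v (size h')) ->
  cont_pay u s1 s2 h n <= \sum_(k < n) v k.
Proof.
elim: n h v => [|n IH] h v hmix hle /=; first by rewrite big_ord0.
have [m1 m2] := hmix [::]; rewrite cats0 in m1 m2.
have tail_le a1 a2 : u a1 a2 + cont_pay u s1 s2 (rcons h (a1, a2)) n <=
                     u a1 a2 + \sum_(k < n) v k.+1.
  rewrite lerD2l; apply: (IH _ (fun k => v k.+1)) => h'; rewrite cat_rcons.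
    exact: hmix.
  exact: hle.
apply: le_trans (sum2_le m1 m2 tail_le) _.
by rewrite sum2_split // big_ord_recl lerD2r; have := hle [::]; rewrite cats0.
Qed.

Lemma cont_pay_eq u s1 s2 h (v : nat -> R) n :
  (forall h', is_mixed (s1 (h ++ h')) /\ is_mixed (s2 (h ++ h'))) ->
  (forall h', exp_pay u (s1 (h ++ h')) (s2 (h ++ h')) = v (size h')) ->
  cont_pay u s1 s2 h n = \sum_(k < n) v k.
Proof.
elim: n h v => [|n IH] h v hmix heq /=; first by rewrite big_ord0.
have [m1 m2] := hmix [::]; rewrite cats0 in m1 m2.
have tail_eq a1 a2 : cont_pay u s1 s2 (rcons h (a1, a2)) n = \sum_(k < n) v k.+1.
  apply: (IH _ (fun k => v k.+1)) => h'; rewrite cat_rcons.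
    exact: hmix.
  exact: heq.
under eq_bigr => a1 _ do under eq_bigr => a2 _ do rewrite tail_eq.
by rewrite sum2_split // big_ord_recl; have := heq [::]; rewrite cats0 => ->.
Qed.

Variables (r : regime) (G : game R A1 A2).
Variable f : nat -> {ffun A1 -> R} * {ffun A2 -> R}.
Hypothesis f_nash : forall k, stage_nash r G (f k).1 (f k).2.

Definition seq_value u n : R := \sum_(k < n) exp_pay u (f k).1 (f k).2.

Lemma follow_eq u s1 s2 h n :
  (forall h', s1 (h ++ h') = (f (size h')).1) ->
  (forall h', s2 (h ++ h') = (f (size h')).2) ->
  cont_pay u s1 s2 h n = seq_value u n.
Proof.
move=> hs1 hs2.
apply: (cont_pay_eq (v := fun k => exp_pay u (f k).1 (f k).2)) => h'; rewrite hs1 hs2 //.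
exact: nash_mixed (f_nash _).
Qed.

(* Against the prescribed play, a unilateral deviation of player 1 (resp. 2)
   gains nothing in any round, hence nothing overall. *)
Lemma follow_dev1 t1 s2 h n : avail_strat (mix1 r) t1 ->
  (forall h', s2 (h ++ h') = (f (size h')).2) ->
  cont_pay (u1 G) t1 s2 h n <= seq_value (u1 G) n.
Proof.
move=> ht1 hs2.
apply: (cont_pay_le (v := fun k => exp_pay (u1 G) (f k).1 (f k).2)) => h'; rewrite hs2.
  by split; [apply: avail_mixed (ht1 _) | case: (nash_mixed (f_nash (size h')))].
by case: (f_nash (size h')) => _ _ dev _; apply: dev.
Qed.

Lemma follow_dev2 s1 t2 h n : avail_strat (mix2 r) t2 ->
  (forall h', s1 (h ++ h') = (f (size h')).1) ->
  cont_pay (u2 G) s1 t2 h n <= seq_value (u2 G) n.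
Proof.
move=> ht2 hs1.
apply: (cont_pay_le (v := fun k => exp_pay (u2 G) (f k).1 (f k).2)) => h'; rewrite hs1.
  by split; [case: (nash_mixed (f_nash (size h'))) | apply: avail_mixed (ht2 _)].
by case: (f_nash (size h')) => _ _ _ dev; apply: dev.
Qed.

Lemma follow_rep_nash s1 s2 n :
  (forall h, s1 h = (f (size h)).1) -> (forall h, s2 h = (f (size h)).2) ->
  rep_nash r G n s1 s2.
Proof.
move=> hs1 hs2; split=> [h|h|t1 ht1|t2 ht2]; rewrite ?hs1 ?hs2.
- by case: (f_nash (size h)).
- by case: (f_nash (size h)).
- by rewrite /rep_pay (follow_eq (h := [::]) _ _ hs1 hs2); apply: follow_dev1.
- by rewrite /rep_pay (follow_eq (h := [::]) _ _ hs1 hs2); apply: follow_dev2.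
Qed.

End FollowingStageEquilibria.

Section StageGame.
Variables (R : realType) (A1 A2 : finType) (G : game R A1 A2).

Lemma exp_pay_indep1 (u : A1 -> A2 -> R) (a0 : A1) p q : is_mixed p ->
  (forall a b, u a b = u a0 b) -> exp_pay u p q = \sum_(b : A2) q b * u a0 b.
Proof.
move=> mp hu; rewrite /exp_pay.
under eq_bigr => a _ do under eq_bigr => b _ do rewrite -mulrA.
under eq_bigr => a _ do rewrite -mulr_sumr.
by apply: mixed_avg_const => // a; apply: eq_bigr => b _; rewrite hu.
Qed.

Lemma exp_pay_indep2 (u : A1 -> A2 -> R) (b0 : A2) p q : is_mixed q ->
  (forall a b, u a b = u a b0) -> exp_pay u p q = \sum_(a : A1) p a * u a b0.
Proof.
move=> mq hu; rewrite /exp_pay; apply: eq_bigr => a _.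
under eq_bigr => b _ do rewrite [p a * _]mulrC -mulrA.
by apply: mixed_avg_const => // b; rewrite hu.
Qed.

(* If every pure profile is an (m,p)-equilibrium, then each payoff ignores
   its owner's action, so every mixed profile is an (m,m)-equilibrium. *)
Lemma all_pure_nash_trivial :
  (forall a1 a2, stage_nash MP G (dirac R a1) (dirac R a2)) ->
  forall p1 p2, is_mixed p1 -> is_mixed p2 -> stage_nash MM G p1 p2.
Proof.
move=> hall p1 p2 m1 m2.
have [a0] := mixed_inhabited m1; have [b0] := mixed_inhabited m2.
have own1 a a' b : u1 G a b = u1 G a' b.
  have dev a1 a1' : u1 G a1 b <= u1 G a1' b.
    case: (hall a1' b) => _ _ dev _; have := dev _ (dirac_mixed R a1).
    by rewrite !exp_pay_dirac.
  by apply/le_anti; rewrite !dev.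
have own2 a b b' : u2 G a b = u2 G a b'.
  have dev a2 a2' : u2 G a a2 <= u2 G a a2'.
    case: (hall a a2') => _ _ _ dev; have := dev (dirac R a2) (ex_intro _ a2 erefl).
    by rewrite !exp_pay_dirac.
  by apply/le_anti; rewrite !dev.
split=> //= q mq.
  by rewrite (exp_pay_indep1 _ mq (own1^~ a0)) (exp_pay_indep1 _ m1 (own1^~ a0)).
have own2' a b : u2 G a b = u2 G a b0 by apply: own2.
by rewrite (exp_pay_indep2 _ mq own2') (exp_pay_indep2 _ m2 own2').
Qed.

Lemma pure_non_nash_of_GLS_MM : in_GLS MM G ->
  exists a1 a2, ~ stage_nash MP G (dirac R a1) (dirac R a2).
Proof.
case=> T [s1 [s2 [_ spe [h [hT not_nash]]]]].
have [av1 av2 _ _] := spe h hT.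
have m1 : is_mixed (s1 h) by have := av1 [::]; rewrite /shift cats0.
have m2 : is_mixed (s2 h) by have := av2 [::]; rewrite /shift cats0.
apply: NNPP => all_nash; apply/not_nash/all_pure_nash_trivial => // a1 a2.
by apply: NNPP => hn; apply: all_nash; exists a1, a2.
Qed.

Lemma two_values (X Y : Type) (N : X -> Y -> Prop) (f : X -> Y -> R) :
  more_than_one (fun x => exists p q, N p q /\ x = f p q) ->
  exists p q p' q', [/\ N p q, N p' q' & f p' q' < f p q].
Proof.
case=> _ [_ [[p [q [n ->]]] [p' [q' [n' ->]]] neq]].
case: (ltgtP (f p q) (f p' q')) => // lt.
  by exists p', q', p, q.
by exists p, q, p', q'.
Qed.

End StageGame.

Section Construction.
Variables (R : realType) (A1 A2 : finType) (G : game R A1 A2).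
Variables (a1 : A1) (a2 : A2).
Variables (P1 P1' P2 P2' : {ffun A1 -> R}) (Q1 Q1' Q2 Q2' : {ffun A2 -> R}).
Hypotheses (reward1 : stage_nash MP G P1 Q1) (punish1 : stage_nash MP G P1' Q1').
Hypotheses (reward2 : stage_nash MP G P2 Q2) (punish2 : stage_nash MP G P2' Q2').
(* Length of each of the two phases following round one. *)
Variable K : nat.

Local Notation profile := ({ffun A1 -> R} * {ffun A2 -> R})%type.

Definition phase1 (e : A1 * A2) : profile :=
  if e.1 == a1 then (P1, Q1) else (P1', Q1').
Definition phase2 (e : A1 * A2) : profile :=
  if e.2 == a2 then (P2, Q2) else (P2', Q2').

(* Profile played at a history of length n >= 1 starting with outcome e. *)
Definition tail_profile (e : A1 * A2) (n : nat) : profile :=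
  if (n <= K)%N then phase1 e else phase2 e.

Definition play1 (h : history A1 A2) : {ffun A1 -> R} :=
  if h is e :: _ then (tail_profile e (size h)).1 else dirac R a1.
Definition play2 (h : history A1 A2) : {ffun A2 -> R} :=
  if h is e :: _ then (tail_profile e (size h)).2 else dirac R a2.

Definition tail_value (u : A1 -> A2 -> R) (e : A1 * A2) : R :=
  exp_pay u (phase1 e).1 (phase1 e).2 *+ K + exp_pay u (phase2 e).1 (phase2 e).2 *+ K.

Lemma tail_profile_nash e n :
  stage_nash MP G (tail_profile e n).1 (tail_profile e n).2.
Proof. by rewrite /tail_profile /phase1 /phase2; case: ifP; case: ifP. Qed.

Lemma play1_avail : avail_strat true play1.
Proof.
by case=> [|e h]; [apply: dirac_mixed | case: (tail_profile_nash e (size h).+1)].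
Qed.

Lemma play2_avail : avail_strat false play2.
Proof. by case=> [|e h]; [exists a2 | case: (tail_profile_nash e (size h).+1)]. Qed.

Lemma tail_sum u e :
  seq_value (fun k => tail_profile e k.+1) u (K + K) = tail_value u e.
Proof.
rewrite /seq_value big_split_ord /tail_value; congr (_ + _).
  rewrite -[K in _ *+ K]card_ord -sumr_const; apply: eq_bigr => k _.
  by rewrite /tail_profile /= ltn_ord.
rewrite -[K in _ *+ K]card_ord -sumr_const; apply: eq_bigr => k _.
by rewrite /tail_profile /= ifF // ltnNge leq_addr.
Qed.

Lemma tail_eq u e : cont_pay u play1 play2 [:: e] (K + K) = tail_value u e.
Proof.
by rewrite -tail_sum; apply: (follow_eq (fun k => tail_profile_nash e k.+1)).
Qed.

Lemma tail_dev1 t1 e : avail_strat true t1 ->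
  cont_pay (u1 G) t1 play2 [:: e] (K + K) <= tail_value (u1 G) e.
Proof.
by move=> ht1; rewrite -tail_sum; apply: (follow_dev1 (fun k => tail_profile_nash e k.+1)).
Qed.

Lemma tail_dev2 t2 e : avail_strat false t2 ->
  cont_pay (u2 G) play1 t2 [:: e] (K + K) <= tail_value (u2 G) e.
Proof.
by move=> ht2; rewrite -tail_sum; apply: (follow_dev2 (fun k => tail_profile_nash e k.+1)).
Qed.

Lemma root_value u :
  rep_pay u play1 play2 (K + K).+1 = u a1 a2 + tail_value u (a1, a2).
Proof.
rewrite /rep_pay /=; under eq_bigr => b1 _ do under eq_bigr => b2 _ do rewrite tail_eq.
by rewrite sum2_diracl sum_dirac.
Qed.

Hypothesis gain1 : forall b, u1 G b a2 - u1 G a1 a2 <=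
  K%:R * (exp_pay (u1 G) P1 Q1 - exp_pay (u1 G) P1' Q1').
Hypothesis gain2 : forall b, u2 G a1 b - u2 G a1 a2 <=
  K%:R * (exp_pay (u2 G) P2 Q2 - exp_pay (u2 G) P2' Q2').

Lemma root_dev1 t1 : avail_strat true t1 ->
  rep_pay (u1 G) t1 play2 (K + K).+1 <= rep_pay (u1 G) play1 play2 (K + K).+1.
Proof.
move=> ht1; have mt := avail_mixed (ht1 [::]).
have step b1 b2 : u1 G b1 b2 + cont_pay (u1 G) t1 play2 [:: (b1, b2)] (K + K) <=
                  u1 G b1 b2 + tail_value (u1 G) (b1, b2).
  by rewrite lerD2l; apply: tail_dev1.
rewrite root_value /rep_pay /=; apply: le_trans (sum2_le mt (dirac_mixed R a2) step) _.
rewrite sum2_diracr; apply: mixed_avg_le => // b.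
case: (eqVneq b a1) => [->|nb] //.
rewrite /tail_value /phase1 /phase2 /= !eqxx (negbTE nb).
by have := gain1 b; rewrite mulr_natl mulrnBl; lra.
Qed.

Lemma root_dev2 t2 : avail_strat false t2 ->
  rep_pay (u2 G) play1 t2 (K + K).+1 <= rep_pay (u2 G) play1 play2 (K + K).+1.
Proof.
move=> ht2; have mt := avail_mixed (ht2 [::]).
have step b1 b2 : u2 G b1 b2 + cont_pay (u2 G) play1 t2 [:: (b1, b2)] (K + K) <=
                  u2 G b1 b2 + tail_value (u2 G) (b1, b2).
  by rewrite lerD2l; apply: tail_dev2.
rewrite root_value /rep_pay /=; apply: le_trans (sum2_le (dirac_mixed R a1) mt step) _.
rewrite sum2_diracl; apply: mixed_avg_le => // b.
case: (eqVneq b a2) => [->|nb] //.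
rewrite /tail_value /phase1 /phase2 /= !eqxx (negbTE nb).
by have := gain2 b; rewrite mulr_natl mulrnBl; lra.
Qed.

Lemma construction_GLS :
  ~ stage_nash MP G (dirac R a1) (dirac R a2) -> in_GLS MP G.
Proof.
move=> not_nash; exists (K + K).+1, play1, play2; split=> //; last by exists [::].
move=> [|e h] hT.
  rewrite subn0; split; [exact: play1_avail | exact: play2_avail | |].
    exact: root_dev1.
  exact: root_dev2.
apply: (follow_rep_nash (fun k => tail_profile_nash e (size h + k).+1)) => h';
  by rewrite /shift /= size_cat.
Qed.

End Construction.

Lemma eventually_below (R : archiRealFieldType) (A : finType) (F : A -> R) (d : R) :
  0 < d -> exists K0, forall K, (K0 <= K)%N -> forall a, F a <= K%:R * d.
Proof.
move=> d0; exists (Num.truncn ((\sum_(a : A) `|F a|) / d)).+1 => K hK a.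
have F_le : F a <= \sum_(b : A) `|F b|.
  by apply: le_trans (ler_norm _) _; rewrite (bigD1 a) //= lerDl sumr_ge0.
apply: le_trans F_le _; rewrite -ler_pdivrMr //.
by apply: le_trans (ltW (truncnS_gt _)) _; rewrite ler_nat.
Qed.

Theorem mainTheorem14 (R : realType) (A1 A2 : finType) (G : game R A1 A2) :
  (0 < #|A1|)%N -> (0 < #|A2|)%N ->
  more_than_one (V1 MP G) -> more_than_one (V2 MP G) ->
  in_GLS MM G -> in_GLS MP G.
Proof.
move=> _ _ hV1 hV2 hMM.
have [a1 [a2 not_nash]] := pure_non_nash_of_GLS_MM hMM.
have [P1 [Q1 [P1' [Q1' [reward1 punish1 lt1]]]]] := two_values hV1.
have [P2 [Q2 [P2' [Q2' [reward2 punish2 lt2]]]]] := two_values hV2.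
rewrite -subr_gt0 in lt1; rewrite -subr_gt0 in lt2.
have [K1 gain1] := eventually_below (fun b => u1 G b a2 - u1 G a1 a2) lt1.
have [K2 gain2] := eventually_below (fun b => u2 G a1 b - u2 G a1 a2) lt2.
apply: (construction_GLS reward1 punish1 reward2 punish2 (K := K1 + K2) _ _ not_nash).
- exact: gain1 (leq_addr _ _).
- exact: gain2 (leq_addl _ _).
Qed.
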